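(* In the Byblos protocol described in the context, if two correct servers both apply to their logs two conflicting, non-cancelled transactions $T_1$ and $T_2$, then they apply them in the same order.
   Context: Byblos protocol. There are $n=4f+1$ servers, at most $f$ Byzantine, the rest correct. Clients are not Byzantine (may crash). Messages between correct parties are eventually delivered, FIFO, authenticated; client messages are signed and unforgeable. Each transaction declares a read set and a write set of keys of a key-value store; two transactions conflict if the write set of one intersects the read or write set of the other. A fixed total order $<$ on transactions (by hash of identifier) is used for tie-breaking. Each correct server keeps: integer $\mathit{clock}$ (initially $0$); sets $\mathit{proposed}[s]$ of pairs $(T,k)$ per server $s$; maps $\mathit{confirmed}[t]$, $\mathit{pending}[t]$ (initially empty); sets $\mathit{committed}$, $\mathit{cancelled}$, $\mathit{resolving}$, $\mathit{ConfirmWitness}[T]$, $\mathit{CancelWitness}[T]$; a $\mathit{log}$; a ledger state; timers $\mathit{timer}[t]$; a timeout constant $\delta$. Client with transaction $T$: broadcasts $\mathrm{Propose}(T)$; waits for $\mathrm{ProposeAck}(T,\cdot)$ from at least $n-f$ servers; sets $\hat t$ to $1$ plus the $(f+1)$-st largest received value (missing values count as $0$); broadcasts $\mathrm{Confirm}(T,\hat t)$; waits for $f+1$ identical $\mathrm{ResolveAck}(T,\mathit{code},\mathit{result})$ and returns $\mathit{result}$ if $\mathit{code}=\mathrm{COMMIT}$, else $\bot$. Correct server: (i) on $\mathrm{Propose}(T)$ from a client, adds $(T,\mathit{clock})$ to $\mathit{proposed}[\mathit{self}]$, sends $\mathrm{Proposed}(T,\mathit{clock})$ to all servers and $\mathrm{ProposeAck}(T,\mathit{clock})$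 to the client; (ii) on $\mathrm{Proposed}(T,k)$ from server $s$, adds $(T,k)$ to $\mathit{proposed}[s]$; (iii) on $\mathrm{Confirm}(T,\hat t)$ from a client or server $s$: $\mathit{clock}:=\max(\mathit{clock},\hat t)$, adds $T$ to $\mathit{confirmed}[\hat t]$, forwards the Confirm to all servers once, adds $s$ to $\mathit{ConfirmWitness}[T]$; if $\mathit{pending}[\hat t]=\emptyset$ and $|\mathit{ConfirmWitness}[T]|=n-f$, sets $\mathit{pending}[\hat t]$ to the set of $T'$ with $(T',k)\in\mathit{proposed}[s']$ for some $s'\in\mathit{ConfirmWitness}[T]$, $k\le\hat t$, and sets $\mathit{timer}[\hat t]$ to expire after $\delta$; if $T\notin\mathit{resolving}$, adds it and starts a resolution of $T$ with input COMMIT; (iv) on $\mathrm{StartResolution}(T,\mathit{code})$ from server $s$ with $T\notin\mathit{resolving}$: if COMMIT, adds $T$ to $\mathit{resolving}$ and starts a resolution with input COMMIT; if CANCEL, adds $s$ to $\mathit{CancelWitness}[T]$ and once it has $\ge f+1$ members, adds $T$ to $\mathit{resolving}$ and starts a resolution with input CANCEL; (v) when $\mathit{timer}[t]$ expires, starts a resolution with input CANCEL for each $T'\in\mathit{pending}[t]$ not in $\mathit{resolving}$ (adding it). A resolution of $T$ sends $\mathrm{StartResolution}(T,\mathit{code})$ to all servers and runs a binary Byzantine consensus instance for $T$ (input $1$ for COMMIT, $0$ for CANCEL) satisfying agreement and validity, and terminating in periods of synchrony; decision $1$ adds $T$ to $\mathit{committed}$, decision $0$ to $\mathit{cancelled}$.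 Apply rule: $\mathrm{OrderBefore}(T,T')$ holds iff $T\in\mathit{confirmed}[t]$ and either $T'\in\mathit{confirmed}[t']$ with $t<t'$, or $T'\in\mathit{confirmed}[t]$ and $T<T'$. The server appends $T$ to its log, applies it to the state, and sends $\mathrm{ResolveAck}(T,\mathrm{COMMIT},\mathit{result})$ to its client when $T\in\mathit{committed}\cap\mathit{confirmed}[t]$, $\mathit{pending}[t]\neq\emptyset$, and every $T'\in\mathit{pending}[t]$ either does not conflict with $T$, is in $\mathit{cancelled}$, is in the log, or satisfies $\mathrm{OrderBefore}(T,T')$. A transaction in $\mathit{cancelled}$ not in the log is appended (without being applied) and $\mathrm{ResolveAck}(T,\mathrm{CANCEL},\bot)$ is sent. *)

From mathcomp Require Import all_boot.

Section Byblos.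

(* f = max number of Byzantine servers; servers are 'I_n with n = 4f+1 *)
Variable f : nat.
Local Notation Server := 'I_(4 * f + 1).
Local Notation quorum := (4 * f + 1 - f).

(* transactions (with identifiers, hence an eqType) and keys *)
Variable Tx : eqType.
Variable Key : Type.
Variables rset wset : Tx -> Key -> Prop.
Variable ltx : rel Tx.                       (* the fixed total order < on transactions *)
Variable Byz : {set Server}.

Definition conflict (T1 T2 : Tx) : Prop :=
  (exists k, wset T1 k /\ (rset T2 k \/ wset T2 k)) \/
  (exists k, wset T2 k /\ (rset T1 k \/ wset T1 k)).

(* protocol messages exchanged with / between servers.
   MStart T true = StartResolution(T, COMMIT), MStart T false = ... CANCEL *)
Inductive Msg :=
| MPropose of Tx
| MProposed of Tx & nat
| MConfirm of Tx & nat
| MStart of Tx & bool.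

Record SState := mkS {
  clock : nat;
  proposed : Server -> Tx -> nat -> Prop;
  confirmed : nat -> Tx -> Prop;
  pending : nat -> Tx -> Prop;
  timer : nat -> bool;                       (* timer[t] armed, not yet expired *)
  cwit : Tx -> {set Server};
  xwit : Tx -> {set Server};
  forwarded : Tx -> nat -> Prop;
  resolving : Tx -> Prop;
  rinput : Tx -> bool -> Prop;               (* input of the resolution of T (true = COMMIT) *)
  decided : Tx -> bool -> Prop;              (* decision of the consensus for T:
                                                true = committed, false = cancelled *)
  log : seq (Tx * bool)                      (* (T,true) applied, (T,false) cancelled *)
}.

Definition committed (σ : SState) T := decided σ T true.
Definition cancelled (σ : SState) T := decided σ T false.
Definition in_log (σ : SState) T := exists b, (T, b) \in log σ.

Definition add_proposed (σ : SState) (s : Server) (T : Tx) (k : nat) : SState :=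
  mkS (clock σ)
      (fun s' T' k' => (s' = s /\ T' = T /\ k' = k) \/ proposed σ s' T' k')
      (confirmed σ) (pending σ) (timer σ) (cwit σ) (xwit σ) (forwarded σ)
      (resolving σ) (rinput σ) (decided σ) (log σ).

(* first part of handling Confirm(T,t) from [from] (None = the client):
   clock := max(clock,t), T added to confirmed[t], sender added to ConfirmWitness[T] *)
Definition confirm_core (σ : SState) (from : option Server) (T : Tx) (t : nat) : SState :=
  mkS (maxn (clock σ) t) (proposed σ)
      (fun t' T' => (t' = t /\ T' = T) \/ confirmed σ t' T')
      (pending σ) (timer σ)
      (fun T' => if (T' == T) then
                   (if from is Some s then s |: cwit σ T' else cwit σ T')
                 else cwit σ T')
      (xwit σ) (forwarded σ) (resolving σ) (rinput σ) (decided σ) (log σ).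

Definition mark_forwarded (σ : SState) (T : Tx) (t : nat) : SState :=
  mkS (clock σ) (proposed σ) (confirmed σ) (pending σ) (timer σ) (cwit σ) (xwit σ)
      (fun T' t' => (T' = T /\ t' = t) \/ forwarded σ T' t')
      (resolving σ) (rinput σ) (decided σ) (log σ).

Definition pending_of (σ : SState) (T : Tx) (t : nat) : Tx -> Prop :=
  fun T' => exists s k, s \in cwit σ T /\ proposed σ s T' k /\ k <= t.

Definition set_pending (σ : SState) (t : nat) (P : Tx -> Prop) : SState :=
  mkS (clock σ) (proposed σ) (confirmed σ)
      (fun t' => if t' == t then P else pending σ t')
      (fun t' => if t' == t then true else timer σ t')
      (cwit σ) (xwit σ) (forwarded σ) (resolving σ) (rinput σ) (decided σ) (log σ).

Definition start_res (σ : SState) (T : Tx) (b : bool) : SState :=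
  mkS (clock σ) (proposed σ) (confirmed σ) (pending σ) (timer σ) (cwit σ) (xwit σ)
      (forwarded σ)
      (fun T' => T' = T \/ resolving σ T')
      (fun T' b' => (T' = T /\ b' = b) \/ rinput σ T' b')
      (decided σ) (log σ).

Definition start_all (σ : SState) (ts : seq Tx) (b : bool) : SState :=
  foldl (fun σ T => start_res σ T b) σ ts.

Definition add_xwit (σ : SState) (T : Tx) (s : Server) : SState :=
  mkS (clock σ) (proposed σ) (confirmed σ) (pending σ) (timer σ) (cwit σ)
      (fun T' => if T' == T then s |: xwit σ T' else xwit σ T')
      (forwarded σ) (resolving σ) (rinput σ) (decided σ) (log σ).

Definition expire (σ : SState) (t : nat) : SState :=
  mkS (clock σ) (proposed σ) (confirmed σ) (pending σ)
      (fun t' => if t' == t then false else timer σ t')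
      (cwit σ) (xwit σ) (forwarded σ) (resolving σ) (rinput σ) (decided σ) (log σ).

Definition decide (σ : SState) (T : Tx) (v : bool) : SState :=
  mkS (clock σ) (proposed σ) (confirmed σ) (pending σ) (timer σ) (cwit σ) (xwit σ)
      (forwarded σ) (resolving σ) (rinput σ)
      (fun T' v' => (T' = T /\ v' = v) \/ decided σ T' v') (log σ).

Definition append_log (σ : SState) (e : Tx * bool) : SState :=
  mkS (clock σ) (proposed σ) (confirmed σ) (pending σ) (timer σ) (cwit σ) (xwit σ)
      (forwarded σ) (resolving σ) (rinput σ) (decided σ) (rcons (log σ) e).

Inductive fwd_step (σ : SState) (T : Tx) (t : nat) : SState -> seq Msg -> Prop :=
| FwdNew : ~ forwarded σ T t -> fwd_step σ T t (mark_forwarded σ T t) [:: MConfirm T t]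
| FwdOld : forwarded σ T t -> fwd_step σ T t σ [::].

Inductive pend_step (σ : SState) (T : Tx) (t : nat) : SState -> Prop :=
| PSet : (forall T', ~ pending σ t T') -> #|cwit σ T| = quorum ->
         pend_step σ T t (set_pending σ t (pending_of σ T t))
| PSkip : ~ ((forall T', ~ pending σ t T') /\ #|cwit σ T| = quorum) ->
          pend_step σ T t σ.

Inductive commit_step (σ : SState) (T : Tx) : SState -> seq Msg -> Prop :=
| CSStart : ~ resolving σ T -> commit_step σ T (start_res σ T true) [:: MStart T true]
| CSSkip : resolving σ T -> commit_step σ T σ [::].

Inductive cancel_step (σ : SState) (T : Tx) : SState -> seq Msg -> Prop :=
| XStart : f.+1 <= #|xwit σ T| -> cancel_step σ T (start_res σ T false) [:: MStart T false]
| XWait : #|xwit σ T| < f.+1 -> cancel_step σ T σ [::].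

(* reception of message m by correct server self, from [from] (None = the
   client of the transaction).  Outputs: new state, messages broadcast to all
   servers, and possibly a ProposeAck(T,k) sent to the client. *)
Inductive srecv (self : Server) :
  option Server -> Msg -> SState -> SState -> seq Msg -> option (Tx * nat) -> Prop :=
| RPropose T σ :
    srecv self None (MPropose T) σ (add_proposed σ self T (clock σ))
          [:: MProposed T (clock σ)] (Some (T, clock σ))
| RProposed s T k σ :
    srecv self (Some s) (MProposed T k) σ (add_proposed σ s T k) [::] None
| RConfirm from T t σ σ1 o1 σ2 σ3 o3 :
    fwd_step (confirm_core σ from T t) T t σ1 o1 ->
    pend_step σ1 T t σ2 ->
    commit_step σ2 T σ3 o3 ->
    srecv self from (MConfirm T t) σ σ3 (o1 ++ o3) None
| RStartIgnore s T b σ :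
    resolving σ T -> srecv self (Some s) (MStart T b) σ σ [::] None
| RStartCommit s T σ :
    ~ resolving σ T ->
    srecv self (Some s) (MStart T true) σ (start_res σ T true) [:: MStart T true] None
| RStartCancel s T σ σ' o :
    ~ resolving σ T -> cancel_step (add_xwit σ T s) T σ' o ->
    srecv self (Some s) (MStart T false) σ σ' o None.

Definition order_before (σ : SState) (T T' : Tx) : Prop :=
  exists t, confirmed σ t T /\
    ((exists t', confirmed σ t' T' /\ t < t') \/ (confirmed σ t T' /\ ltx T T')).

Inductive slocal : SState -> SState -> seq Msg -> Prop :=
| LTimer t ts σ :
    timer σ t -> uniq ts ->
    (forall T, T \in ts <-> pending σ t T /\ ~ resolving σ T) ->
    slocal σ (start_all (expire σ t) ts false) [seq MStart T false | T <- ts]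
| LApply T t σ :
    committed σ T -> confirmed σ t T -> (exists T', pending σ t T') ->
    ~ in_log σ T ->
    (forall T', pending σ t T' ->
       ~ conflict T T' \/ cancelled σ T' \/ in_log σ T' \/ order_before σ T T') ->
    slocal σ (append_log σ (T, true)) [::]
| LCancel T σ :
    cancelled σ T -> ~ in_log σ T ->
    slocal σ (append_log σ (T, false)) [::].

Record World := mkW {
  sst : Server -> SState;                     (* states of the servers (used for correct ones) *)
  chan : Server -> Server -> seq Msg;         (* FIFO channel src -> dst *)
  cchan : Tx -> Server -> seq Msg;            (* FIFO channel client of T -> dst *)
  acked : Tx -> Server -> nat -> Prop;        (* correct server sent ProposeAck(T,k) *)
  cproposed : Tx -> bool;
  cconfirm : Tx -> option nat                 (* client of T signed/broadcast Confirm(T,t^) *)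
}.

Definition upd_s (w : World) (s : Server) (σ : SState) : World :=
  mkW (fun s' => if s' == s then σ else sst w s') (chan w) (cchan w) (acked w)
      (cproposed w) (cconfirm w).

Definition bcast (w : World) (s : Server) (out : seq Msg) : World :=
  mkW (sst w) (fun a b => if a == s then chan w a b ++ out else chan w a b)
      (cchan w) (acked w) (cproposed w) (cconfirm w).

Definition send1 (w : World) (a b : Server) (m : Msg) : World :=
  mkW (sst w) (fun a' b' => if (a' == a) && (b' == b) then rcons (chan w a' b') m
                            else chan w a' b')
      (cchan w) (acked w) (cproposed w) (cconfirm w).

Definition pop_chan (w : World) (a b : Server) (rest : seq Msg) : World :=
  mkW (sst w) (fun a' b' => if (a' == a) && (b' == b) then rest else chan w a' b')
      (cchan w) (acked w) (cproposed w) (cconfirm w).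

Definition pop_cchan (w : World) (T : Tx) (b : Server) (rest : seq Msg) : World :=
  mkW (sst w) (chan w) (fun T' b' => if (T' == T) && (b' == b) then rest else cchan w T' b')
      (acked w) (cproposed w) (cconfirm w).

Definition record_ack (w : World) (s : Server) (ack : option (Tx * nat)) : World :=
  if ack is Some (T, k) then
    mkW (sst w) (chan w) (cchan w)
        (fun T' s' k' => (T' = T /\ s' = s /\ k' = k) \/ acked w T' s' k')
        (cproposed w) (cconfirm w)
  else w.

Definition after_recv (w : World) (s : Server) (σ : SState) (out : seq Msg)
    (ack : option (Tx * nat)) : World :=
  record_ack (bcast (upd_s w s σ) s out) s ack.

Definition client_propose (w : World) (T : Tx) : World :=
  mkW (sst w) (chan w)
      (fun T' b => if T' == T then rcons (cchan w T' b) (MPropose T) else cchan w T' b)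
      (acked w) (fun T' => (T' == T) || cproposed w T') (cconfirm w).

Definition client_confirm (w : World) (T : Tx) (t : nat) : World :=
  mkW (sst w) (chan w)
      (fun T' b => if T' == T then rcons (cchan w T' b) (MConfirm T t) else cchan w T' b)
      (acked w) (cproposed w) (fun T' => if T' == T then Some t else cconfirm w T').

(* t^ = 1 + the (f+1)-st largest received value, missing values counting as 0 *)
Definition hat_t (S : {set Server}) (K : Server -> nat) : nat :=
  (nth 0 (sort geq [seq (if s \in S then K s else 0) | s <- enum Server]) f).+1.

(* messages a Byzantine server may send: anything except client messages;
   a Confirm must carry the (unforgeable) signature of the client *)
Definition byz_msg (w : World) (m : Msg) : Prop :=
  match m with
  | MPropose _ => False
  | MConfirm T t => cconfirm w T = Some t
  | _ => True
  end.

Inductive step : World -> World -> Prop :=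
| StClientPropose T w :
    ~~ cproposed w T -> step w (client_propose w T)
| StClientConfirm T (S : {set Server}) (K : Server -> nat) w :
    cproposed w T -> cconfirm w T = None -> quorum <= #|S| ->
    (forall s, s \in S -> s \notin Byz -> acked w T s (K s)) ->
    step w (client_confirm w T (hat_t S K))
| StRecvClient T s m rest σ' out ack w :
    s \notin Byz -> cchan w T s = m :: rest ->
    srecv s None m (sst w s) σ' out ack ->
    step w (after_recv (pop_cchan w T s rest) s σ' out ack)
| StRecvServer a s m rest σ' out ack w :
    s \notin Byz -> chan w a s = m :: rest ->
    srecv s (Some a) m (sst w s) σ' out ack ->
    step w (after_recv (pop_chan w a s rest) s σ' out ack)
| StLocal s σ' out w :
    s \notin Byz -> slocal (sst w s) σ' out ->
    step w (bcast (upd_s w s σ') s out)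
| StDecide s T v w :
    s \notin Byz -> resolving (sst w s) T -> (forall v', ~ decided (sst w s) T v') ->
    (* agreement *)
    (forall s' v', s' \notin Byz -> decided (sst w s') T v' -> v' = v) ->
    (* validity: the decided value is the input of some correct server *)
    (exists2 s', s' \notin Byz & rinput (sst w s') T v) ->
    step w (upd_s w s (decide (sst w s) T v))
| StByz b s m w :
    b \in Byz -> byz_msg w m -> step w (send1 w b s m).

Definition init_s : SState :=
  mkS 0 (fun _ _ _ => False) (fun _ _ => False) (fun _ _ => False) (fun _ => false)
      (fun _ => set0) (fun _ => set0) (fun _ _ => False) (fun _ => False)
      (fun _ _ => False) (fun _ _ => False) [::].

Definition init_w : World :=
  mkW (fun _ => init_s) (fun _ _ => [::]) (fun _ _ => [::]) (fun _ _ _ => False)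
      (fun _ => false) (fun _ => None).

Inductive reachable : World -> Prop :=
| RInit : reachable init_w
| RStep w w' : reachable w -> step w w' -> reachable w'.

End Byblos.

Definition before {A : Type} (l : seq A) (x y : A) : Prop :=
  exists l1 l2 l3, l = l1 ++ x :: l2 ++ y :: l3.

(* Safety rests on an invariant of every correct log: if T2 is applied while a
   conflicting T1 is not yet in the log, then T1 is cancelled there, or the
   confirmed timestamps satisfy (t2, T2) < (t1, T1) lexicographically, or some
   quorum of n - f servers has closed t2 against T1: the clocks of its correct
   members have passed t2 and none of them acknowledged T1 below t2.  The last
   case arises when pending[t2] misses T1, from the quorum that built it.  A
   closed quorum forces t2 < t1, because t1 exceeds the acknowledgements of
   2f + 1 servers, one of which is correct and in the quorum.  Hence two correct
   servers applying the committed T1 and T2 in opposite orders would give both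
   (t1, T1) < (t2, T2) and (t2, T2) < (t1, T1); cancellation is excluded by the
   agreement of consensus. *)

From mathcomp Require Import all_boot zify.
From Stdlib Require List Classical_Prop.

Lemma count_gt_nth_sort (l : seq nat) i :
  count (fun x => nth 0 (sort geq l) i < x) l <= i.
Proof.
set s := sort geq l; set m := nth 0 s i.
have /permP <- : perm_eq s l by rewrite perm_sort.
have drop_le : all (fun x => x <= m) (drop i s).
  have : sorted geq (drop i s).
    by apply/drop_sorted/sort_sorted => x y; exact: leq_total.
  rewrite /m -[X in nth 0 s X]addn0 -nth_drop; case: (drop i s) => //= x r sorted_xr.
  rewrite leqnn; apply/allP => y y_r.
  by have /allP /(_ y y_r) := order_path_min (rev_trans leq_trans) sorted_xr.
rewrite -(cat_take_drop i s) count_cat.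
have -> : count (fun x => m < x) (drop i s) = 0.
  by apply/eqP; rewrite -leqn0 leqNgt -has_count; apply/hasPn => x /(allP drop_le); rewrite -leqNgt.
by rewrite addn0 (leq_trans (count_size _ _)) // size_take; case: ifP => // /negbT; rewrite -leqNgt.
Qed.

Lemma card_set_count (T : finType) (P : pred T) : #|[set x | P x]| = count P (enum T).
Proof. by rewrite cardsE cardE /enum_mem size_filter filter_predT; apply: eq_count. Qed.

Lemma hat_t_quorum f (S : {set 'I_(4 * f + 1)}) (K : 'I_(4 * f + 1) -> nat) :
  4 * f + 1 - f <= #|S| -> 2 * f + 1 <= #|[set s in S | K s < hat_t f S K]|.
Proof.
move=> quorum_S; set A := [set s in S | _].
pose v s := if s \in S then K s else 0.
set B := [set s | hat_t f S K <= v s].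
have card_B : #|B| <= f by rewrite card_set_count -count_map; exact: count_gt_nth_sort.
have S_AB : S \subset A :|: B.
  by apply/subsetP => s s_S; rewrite !inE s_S /v s_S; case: ltnP.
have := leq_trans quorum_S (leq_trans (subset_leq_card S_AB) (leq_card_setU A B)).
lia.
Qed.

Lemma before_total {T : eqType} {l : seq T} {x y} : x \in l -> y \in l -> x != y ->
  before l x y \/ before l y x.
Proof.
elim: l => [//|z l IH]; rewrite !in_cons => x_l y_l x_neq_y.
case: (eqVneq x z) => [x_eq_z|x_neq_z].
  subst z; have /splitPr [p q] : y \in l by move: y_l; rewrite eq_sym (negbTE x_neq_y).
  by left; exists [::], p, q.
case: (eqVneq y z) => [y_eq_z|y_neq_z].
  subst z; have /splitPr [p q] : x \in l by move: x_l; rewrite (negbTE x_neq_z).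
  by right; exists [::], p, q.
move: x_l y_l; rewrite (negbTE x_neq_z) (negbTE y_neq_z) /= => x_l y_l.
by case: (IH x_l y_l x_neq_y) => -[l1 [l2 [l3 ->]]]; [left|right]; exists (z :: l1), l2, l3.
Qed.

Lemma cat_eq_cat_cons (A : Type) (X Y p q : seq A) (x : A) : X ++ Y = p ++ x :: q ->
  (exists q', X = p ++ x :: q') \/ (exists2 p', p = X ++ p' & Y = p' ++ x :: q).
Proof.
elim: X p => [|z X IH] [|y p] //=.
- by move=> ->; right; exists [::].
- by move=> ->; right; exists (y :: p).
- by case=> -> _; left; exists X.
case=> -> /IH [[q' ->]|[p' -> ->]]; first by left; exists q'.
by right; exists p'.
Qed.

Lemma rcons_eq_cat_cons (A : Type) (l p q : seq A) (e x : A) : rcons l e = p ++ x :: q ->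
  [/\ p = l, x = e & q = [::]] \/ (exists q', l = p ++ x :: q').
Proof.
rewrite -cats1 => /(@cat_eq_cat_cons A) [[q' ->]|[[|y p'] -> []]].
- by right; exists q'.
- by move=> <- <-; left; rewrite cats0.
- by case: p'.
Qed.

Lemma In_rcons {A : Type} {x y : A} {l} : List.In x (rcons l y) -> List.In x l \/ x = y.
Proof. by rewrite -cats1 => /(List.in_app_or _ _ _) [|[<-|[]]]; [left|right]. Qed.

Lemma uniq_fst_before (A B : eqType) (l1 l2 l3 : seq (A * B)) x y :
  uniq (map fst (l1 ++ x :: l2 ++ y :: l3)) -> x.1 != y.1 /\ forall b, (y.1, b) \notin l1.
Proof.
rewrite map_cat cat_uniq /= => /and3P [_ no_l1 /andP [x_fresh _]].
have y_later : y.1 \in [seq i.1 | i <- l2 ++ y :: l3] by rewrite map_cat mem_cat inE eqxx orbT.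
split; first by apply: contraNneq x_fresh => ->.
move=> b; apply: contraNN no_l1 => yb_l1; apply/orP; right; apply/hasP; exists y.1 => //.
exact: (map_f fst yb_l1).
Qed.

Section Byblos_safety.
Variable f : nat.
Variable Tx : eqType.
Variable Key : Type.
Variables rset wset : Tx -> Key -> Prop.
Variable ltx : rel Tx.
Variable Byz : {set 'I_(4 * f + 1)}.

Arguments clock {f Tx}. Arguments proposed {f Tx}. Arguments confirmed {f Tx}.
Arguments pending {f Tx}. Arguments cwit {f Tx}. Arguments decided {f Tx}. Arguments log {f Tx}.
Arguments committed {f Tx}. Arguments cancelled {f Tx}. Arguments in_log {f Tx}.
Arguments confirm_core {f Tx}. Arguments pending_of {f Tx}.
Arguments start_res {f Tx}. Arguments start_all {f Tx}.
Arguments sst {f Tx}. Arguments chan {f Tx}. Arguments cchan {f Tx}.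
Arguments acked {f Tx}. Arguments cconfirm {f Tx}.
Arguments upd_s {f Tx}. Arguments bcast {f Tx}. Arguments after_recv {f Tx}.
Arguments pop_chan {f Tx}. Arguments pop_cchan {f Tx}.
Arguments MPropose {Tx}. Arguments MProposed {Tx}. Arguments MConfirm {Tx}. Arguments MStart {Tx}.

Local Notation Server := 'I_(4 * f + 1).
Local Notation quorum := (4 * f + 1 - f).
Local Notation SS := (SState f Tx).
Local Notation WW := (World f Tx).
Local Notation Msg := (Msg Tx).
Local Notation correct s := (s \notin Byz).
Local Notation srecv := (srecv f Tx).
Local Notation slocal := (slocal f Tx Key rset wset ltx).
Local Notation step := (step f Tx Key rset wset ltx Byz).
Local Notation conflict := (conflict Tx Key rset wset).
Local Notation In := List.In.

(* The clocks of these servers are past [t], so they can no longer acknowledge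
   a proposal below [t]: the property is stable. *)
Definition quorum_closed_below (w : WW) (t : nat) (P : Tx -> Prop) :=
  exists W : {set Server}, quorum <= #|W| /\
    forall a, a \in W -> correct a -> t <= clock (sst w a) /\
      forall T k, acked w T a k -> k < t -> P T.

Definition acks_known_below (w : WW) (s a : Server) (t : nat) :=
  t <= clock (sst w a) /\ forall T k, acked w T a k -> k < t -> proposed (sst w s) a T k.

Definition ts_lt (t1 : nat) (T1 : Tx) (t2 : nat) (T2 : Tx) :=
  t1 < t2 \/ (t1 = t2 /\ ltx T1 T2).

Definition precedes_safely (w : WW) (s : Server) (T2 T1 : Tx) :=
  [\/ cancelled (sst w s) T1,
      exists t2 t1, [/\ cconfirm w T2 = Some t2, cconfirm w T1 = Some t1 & ts_lt t2 T2 t1 T1]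
    | exists2 t2, cconfirm w T2 = Some t2 & quorum_closed_below w t2 (fun T => T <> T1)].

Record msg_inv (w : WW) : Prop := {
  signed_quorum : forall T t, cconfirm w T = Some t -> exists A : {set Server},
    2 * f + 1 <= #|A| /\ forall a, a \in A -> correct a -> exists2 k, acked w T a k & k < t;
  chan_signed : forall a b T t, In (MConfirm T t) (chan w a b) -> cconfirm w T = Some t;
  cchan_signed : forall T' b T t, In (MConfirm T t) (cchan w T' b) -> cconfirm w T = Some t;
  confirmed_signed : forall s t T, correct s -> confirmed (sst w s) t T -> cconfirm w T = Some t;
  ack_delivered : forall a s T k, correct a -> correct s -> acked w T a k ->
    proposed (sst w s) a T k \/ In (MProposed T k) (chan w a s);
  (* FIFO: whatever [a] acknowledged below [t] reaches [s] before [Confirm(T,t)]. *)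
  chan_confirm_covers : forall a s p q T t, correct a -> correct s ->
    chan w a s = p ++ MConfirm T t :: q ->
    t <= clock (sst w a) /\ forall T' k, acked w T' a k -> k < t ->
      proposed (sst w s) a T' k \/ In (MProposed T' k) p;
  cwit_covers : forall s a T, correct s -> correct a -> a \in cwit (sst w s) T ->
    exists2 t, cconfirm w T = Some t & acks_known_below w s a t;
  pending_closed : forall s t T, correct s -> pending (sst w s) t T ->
    quorum_closed_below w t (pending (sst w s) t)
}.

Definition decisions_agree (w : WW) := forall s s' T v v', correct s -> correct s' ->
  decided (sst w s) T v -> decided (sst w s') T v' -> v = v'.

Record log_inv (w : WW) : Prop := {
  decided_agree : decisions_agree w;
  applied_committed : forall s T, correct s -> (T, true) \in log (sst w s) ->
    committed (sst w s) T /\ exists t, cconfirm w T = Some t;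
  log_uniq : forall s, correct s -> uniq (map fst (log (sst w s)));
  applied_safe : forall s p q T2 T1, correct s -> log (sst w s) = p ++ (T2, true) :: q ->
    T1 != T2 -> conflict T2 T1 -> (forall b, (T1, b) \notin p) -> precedes_safely w s T2 T1
}.

Arguments signed_quorum {w}. Arguments chan_signed {w}. Arguments cchan_signed {w}.
Arguments confirmed_signed {w}. Arguments ack_delivered {w}.
Arguments chan_confirm_covers {w}. Arguments cwit_covers {w}. Arguments pending_closed {w}.
Arguments decided_agree {w}. Arguments applied_committed {w}. Arguments log_uniq {w}.
Arguments applied_safe {w}.

Definition grows (w w' : WW) :=
  [/\ forall a, correct a -> clock (sst w a) <= clock (sst w' a),
      forall T a k, acked w' T a k -> acked w T a k \/ clock (sst w a) <= k,
      forall T a k, acked w T a k -> acked w' T a k,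
      forall T t, cconfirm w T = Some t -> cconfirm w' T = Some t &
      forall x T v, correct x -> decided (sst w x) T v -> decided (sst w' x) T v].

Lemma acked_below_grows {w w' a t T k} : grows w w' -> t <= clock (sst w a) ->
  acked w' T a k -> k < t -> acked w T a k.
Proof. by case=> _ new_ack _ _ _ t_le /new_ack [//|k_ge] k_lt; lia. Qed.

Lemma quorum_closed_below_grows {w w' t} {P Q : Tx -> Prop} : grows w w' ->
  (forall T, P T -> Q T) -> quorum_closed_below w t P -> quorum_closed_below w' t Q.
Proof.
move=> g PQ [W [quorum_W closed_W]]; exists W; split=> // a a_W ca.
have [t_le acks_P] := closed_W a a_W ca; split.
  by case: g => clock_le _ _ _ _; exact: leq_trans t_le (clock_le a ca).
by move=> T k ack' k_lt; apply/PQ/(acks_P T k _ k_lt); exact: acked_below_grows g t_le ack' k_lt.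
Qed.

(* [from] and [mo] are the sender and the message processed by the transition,
   [mo = None] for a spontaneous step. *)
Record local_spec (from : option Server) (mo : option Msg) (σ σ' : SS)
    (out : seq Msg) (ack : option (Tx * nat)) : Prop := {
  ls_clock : clock σ <= clock σ';
  ls_proposed : forall x T k, proposed σ x T k -> proposed σ' x T k;
  ls_proposed_recv : forall a T k, from = Some a -> mo = Some (MProposed T k) ->
    proposed σ' a T k;
  ls_confirmed : forall t T, confirmed σ' t T -> confirmed σ t T \/ mo = Some (MConfirm T t);
  ls_cwit : forall T x, x \in cwit σ' T -> x \in cwit σ T \/
    (from = Some x /\ exists t, mo = Some (MConfirm T t));
  ls_pending : forall t, (forall x, pending σ' t x <-> pending σ t x) \/
    (exists T, [/\ mo = Some (MConfirm T t),
       #|cwit (confirm_core σ from T t) T| = quorum &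
       forall x, pending_of (confirm_core σ from T t) T t x -> pending σ' t x]);
  ls_out_confirm : forall T t, In (MConfirm T t) out -> mo = Some (MConfirm T t) /\ t <= clock σ';
  ls_out_proposed : forall T, mo = Some (MPropose T) -> In (MProposed T (clock σ)) out;
  ls_ack : forall T k, ack = Some (T, k) -> mo = Some (MPropose T) /\ k = clock σ
}.

Arguments ls_clock {from mo σ σ' out ack}. Arguments ls_proposed {from mo σ σ' out ack}.
Arguments ls_proposed_recv {from mo σ σ' out ack}.
Arguments ls_confirmed {from mo σ σ' out ack}. Arguments ls_cwit {from mo σ σ' out ack}.
Arguments ls_pending {from mo σ σ' out ack}. Arguments ls_out_confirm {from mo σ σ' out ack}.
Arguments ls_out_proposed {from mo σ σ' out ack}. Arguments ls_ack {from mo σ σ' out ack}.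

Definition same_view (σ σ' : SS) :=
  [/\ clock σ' = clock σ, proposed σ' = proposed σ, confirmed σ' = confirmed σ,
      pending σ' = pending σ & cwit σ' = cwit σ].

Lemma same_view_spec {from mo σ σ' out} : same_view σ σ' ->
  (forall T t, ~ In (MConfirm T t) out) ->
  match mo with None | Some (MStart _ _) => True | _ => False end ->
  local_spec from mo σ σ' out None.
Proof.
move=> [e_clock e_prop e_conf e_pend e_cwit] no_confirm mo_quiet.
split; rewrite ?e_clock ?e_prop ?e_conf ?e_pend ?e_cwit //.
- by move=> a T k _ mo_P; rewrite mo_P in mo_quiet.
- by move=> t T; left.
- by move=> T x; left.
- by move=> t; left.
- by move=> T t /no_confirm.
- by move=> T mo_P; rewrite mo_P in mo_quiet.
Qed.

Definition inert (σ σ' : SS) :=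
  [/\ same_view σ σ', log σ' = log σ & decided σ' = decided σ].

Lemma start_all_inert ts b (σ : SS) : inert σ (start_all σ ts b).
Proof. by elim: ts σ => [|T ts IH] σ //=; case: (IH (start_res σ T b)). Qed.

Lemma confirm_handler_spec from T t σ σ1 o1 σ2 σ3 o3 :
  fwd_step f Tx (confirm_core σ from T t) T t σ1 o1 -> pend_step f Tx σ1 T t σ2 ->
  commit_step f Tx σ2 T σ3 o3 ->
  [/\ local_spec from (Some (MConfirm T t)) σ σ3 (o1 ++ o3) None,
      log σ3 = log σ & decided σ3 = decided σ].
Proof.
set σc := confirm_core σ from T t => fwd pend commit.
have [[c1 p1 f1 pe1 w1] l1 d1] : inert σc σ1 by case: fwd.
have [c2 p2 f2 w2 [l2 d2]] : [/\ clock σ2 = clock σ1, proposed σ2 = proposed σ1,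
    confirmed σ2 = confirmed σ1, cwit σ2 = cwit σ1 &
    log σ2 = log σ1 /\ decided σ2 = decided σ1] by case: pend.
have [[c3 p3 f3 pe3 w3] l3 d3] : inert σ2 σ3 by case: commit.
have o1_confirm M : In M o1 -> M = MConfirm T t by case: fwd => [_ [<-|[]]|_ []].
have o3_start M : In M o3 -> exists b, M = MStart T b by case: commit => [_ [<-|[]]|_ []]; eauto.
split; rewrite ?l3 ?l2 ?l1 ?d3 ?d2 ?d1 //; split=> //.
- by rewrite c3 c2 c1 leq_maxl.
- by move=> x T' k; rewrite p3 p2 p1.
- by move=> t' T'; rewrite f3 f2 f1 => -[[-> ->]|]; [right|left].
- move=> T' x; rewrite w3 w2 w1 /=; case: eqP => [->|]; last by left.
  case: from {fwd pend commit σc c1 p1 f1 pe1 w1 l1 d1} => [a|]; last by left.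
  by rewrite in_setU1 => /orP [/eqP ->|]; [right; split=> //; exists t|left].
- move=> t'; rewrite pe3; case: pend => [pend_empty cwit_quorum|_].
    case: (eqVneq t' t) => [->|t'_neq_t]; last by left => x; rewrite /= (negbTE t'_neq_t) pe1.
    right; exists T; split=> //; first by rewrite -cwit_quorum w1.
    by move=> x; rewrite /= eqxx /pending_of w1 p1.
  by left => x; rewrite pe1.
- move=> T' t' /(List.in_app_or _ _ _) [/o1_confirm [-> ->]|/o3_start [b //]].
  by split=> //; rewrite c3 c2 c1 leq_maxr.
Qed.

Lemma srecv_spec s from m σ σ' out ack : srecv s from m σ σ' out ack ->
  [/\ local_spec from (Some m) σ σ' out ack, log σ' = log σ & decided σ' = decided σ].
Proof.
case=> {from m σ σ' out ack}.
- move=> T σ; split=> //; split=> //=.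
  + by move=> x T' k; right.
  + by move=> t T'; left.
  + by move=> T' x; left.
  + by move=> t; left.
  + by move=> T' t [].
  + by move=> T' [->]; left.
  + by move=> T' k [-> ->].
- move=> a T k σ; split=> //; split=> //=.
  + by move=> x T' k'; right.
  + by move=> a' T' k' [->] [-> ->]; left.
  + by move=> t T'; left.
  + by move=> T' x; left.
  + by move=> t; left.
- by move=> from T t σ σ1 o1 σ2 σ3 o3; exact: confirm_handler_spec.
- by move=> a T b σ _; split=> //; apply: same_view_spec => // T' t [].
- by move=> a T σ _; split=> //; apply: same_view_spec => // T' t [|[]].
- move=> a T σ σ' o _ cancel.
  have [V -> ->] : inert σ σ' by case: cancel.
  by split=> //; apply: same_view_spec => // T' t; case: cancel => [_ [|[]]|_ []].
Qed.

Definition apply_enabled (σ : SS) (T : Tx) := exists t,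
  [/\ committed σ T, confirmed σ t T, exists T', pending σ t T', ~ in_log σ T &
      forall T', pending σ t T' ->
        ~ conflict T T' \/ cancelled σ T' \/ in_log σ T' \/ order_before f Tx ltx σ T T'].

Definition log_step (σ σ' : SS) :=
  [\/ log σ' = log σ,
      exists2 T, log σ' = rcons (log σ) (T, true) & apply_enabled σ T |
      exists2 T, log σ' = rcons (log σ) (T, false) & ~ in_log σ T].

Lemma slocal_spec σ σ' out : slocal σ σ' out ->
  [/\ local_spec None None σ σ' out None, decided σ' = decided σ & log_step σ σ'].
Proof.
case=> {σ σ' out}.
- move=> t ts σ _ _ _.
  have no_confirm T' t' : ~ In (MConfirm T' t') [seq MStart T false | T <- ts].
    by move=> /List.in_map_iff [? []].
  have [V e_log e_dec] := start_all_inert ts false (expire f Tx σ t).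
  have V' : same_view σ (start_all (expire f Tx σ t) ts false) := V.
  by split; [apply: (same_view_spec V' no_confirm)| |constructor 1].
- move=> T t σ ? ? ? ? ?; split=> //; first by apply: same_view_spec => // ? ? [].
  by constructor 2; exists T; last exists t.
- move=> T σ _ ?; split=> //; first by apply: same_view_spec => // ? ? [].
  by constructor 3; exists T.
Qed.

Lemma decide_spec σ T v : local_spec None None σ (decide f Tx σ T v) [::] None.
Proof. by apply: same_view_spec => // ? ? []. Qed.

(* [src] is the channel the processed message was popped from:
   [Some (Some a)] for server [a], [Some None] for a client, [None] for no message. *)
Record world_spec (w w' : WW) (s : Server) (σ' : SS) (out : seq Msg)
    (ack : option (Tx * nat)) (src : option (option Server)) : Prop := {
  ws_sst : forall x, sst w' x = if x == s then σ' else sst w x;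
  ws_chan : forall a b, chan w' a b =
    (if src is Some (Some a0) then
       (if (a == a0) && (b == s) then behead (chan w a b) else chan w a b)
     else chan w a b) ++ (if a == s then out else [::]);
  ws_cchan : forall T b M, In M (cchan w' T b) -> In M (cchan w T b);
  ws_cconfirm : forall T, cconfirm w' T = cconfirm w T;
  ws_acked : forall T x k, acked w' T x k <-> acked w T x k \/ (ack = Some (T, k) /\ x = s)
}.

Arguments ws_sst {w w' s σ' out ack src}. Arguments ws_chan {w w' s σ' out ack src}.
Arguments ws_cchan {w w' s σ' out ack src}. Arguments ws_cconfirm {w w' s σ' out ack src}.
Arguments ws_acked {w w' s σ' out ack src}.

Definition delivered (w : WW) (s : Server) (src : option (option Server))
    (from : option Server) (mo : option Msg) :=
  match src with
  | None => mo = None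
  | Some None => from = None /\ exists T m rest, mo = Some m /\ cchan w T s = m :: rest
  | Some (Some a) => from = Some a /\ exists m rest, mo = Some m /\ chan w a s = m :: rest
  end.

Lemma after_recv_fields (w : WW) s σ' out ack : let w' := after_recv w s σ' out ack in
  [/\ forall x, sst w' x = if x == s then σ' else sst w x,
      forall a b, chan w' a b = chan w a b ++ (if a == s then out else [::]),
      cchan w' = cchan w, cconfirm w' = cconfirm w &
      forall T x k, acked w' T x k <-> acked w T x k \/ (ack = Some (T, k) /\ x = s)].
Proof.
rewrite /after_recv; case: ack => [[T k]|] /=; split=> //.
- by move=> a b; case: ifP; rewrite ?cats0.
- move=> T' x k'; split; first by case=> [[-> [-> ->]]|]; [right|left].
  by case=> [|[[-> ->] ->]]; [right|left].
- by move=> a b; case: ifP; rewrite ?cats0.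
- by move=> T' x k'; split; [left|case=> // -[]].
Qed.

Lemma world_spec_client {w : WW} {T s m rest} σ' out ack : cchan w T s = m :: rest ->
  world_spec w (after_recv (pop_cchan w T s rest) s σ' out ack) s σ' out ack (Some None).
Proof.
move=> cchan_Ts; have [? ? e_cchan e_cconfirm ?] :=
  after_recv_fields (pop_cchan w T s rest) s σ' out ack.
split=> // [T' b M|T']; last by rewrite e_cconfirm.
by rewrite e_cchan /=; case: ifP => // /andP [/eqP -> /eqP ->]; rewrite cchan_Ts; right.
Qed.

Lemma world_spec_server {w : WW} {a s m rest} σ' out ack : chan w a s = m :: rest ->
  world_spec w (after_recv (pop_chan w a s rest) s σ' out ack) s σ' out ack (Some (Some a)).
Proof.
move=> chan_as; have [? e_chan e_cchan e_cconfirm ?] :=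
  after_recv_fields (pop_chan w a s rest) s σ' out ack.
split=> // [a' b'|T b M|T]; rewrite ?e_chan ?e_cchan ?e_cconfirm //=.
by case: ifP => // /andP [/eqP -> /eqP ->]; rewrite chan_as.
Qed.

Lemma world_spec_local (w : WW) s σ' out :
  world_spec w (bcast (upd_s w s σ') s out) s σ' out None None.
Proof.
have [? ? e_cchan e_cconfirm ?] := after_recv_fields w s σ' out None.
by split=> //; rewrite ?e_cchan ?e_cconfirm.
Qed.

Lemma world_spec_decide (w : WW) s σ' : world_spec w (upd_s w s σ') s σ' [::] None None.
Proof.
split=> //= [a b|T x k]; first by rewrite if_same cats0.
by split; [left|case=> // -[]].
Qed.

Lemma grows_server {w w' s σ' out ack src from mo} :
  world_spec w w' s σ' out ack src -> local_spec from mo (sst w s) σ' out ack ->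
  (forall T v, decided (sst w s) T v -> decided σ' T v) -> grows w w'.
Proof.
move=> W L dec_s; split.
- by move=> a _; rewrite (ws_sst W); case: eqP => [->|//]; exact: ls_clock L.
- by move=> T a k /(ws_acked W) [|[/(ls_ack L) [_ ->] ->]]; [left|right].
- by move=> T a k ack_a; apply/(ws_acked W); left.
- by move=> T t; rewrite (ws_cconfirm W).
- by move=> x T v _; rewrite (ws_sst W); case: eqP => [->|//]; exact: dec_s.
Qed.

Section Server_step.
Variables (w w' : WW) (s : Server) (σ' : SS) (out : seq Msg) (ack : option (Tx * nat)).
Variables (src : option (option Server)) (from : option Server) (mo : option Msg).
Hypotheses (IM : msg_inv w) (cs : correct s) (g : grows w w').
Hypotheses (W : world_spec w w' s σ' out ack src) (D : delivered w s src from mo).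
Hypothesis (L : local_spec from mo (sst w s) σ' out ack).

Lemma delivered_confirm_signed {T t} : mo = Some (MConfirm T t) -> cconfirm w T = Some t.
Proof.
move: D => /=; case: src => [[a|]|] /=; last by move=> ->.
- case=> _ [m [rest [-> chan_as]]] [e_m].
  by apply: (chan_signed IM a s); rewrite chan_as -e_m; left.
- case=> _ [T' [m [rest [-> cchan_T's]]]] [e_m].
  by apply: (cchan_signed IM T' s); rewrite cchan_T's -e_m; left.
Qed.

Lemma chan_step a b : exists h rest, [/\ chan w a b = h ++ rest,
  chan w' a b = rest ++ (if a == s then out else [::]) &
  forall M, In M h -> [/\ from = Some a, b = s & mo = Some M]].
Proof.
rewrite (ws_chan W); move: D; case: src => [[a0|]|] /=; last 2 first.
- by move=> _; exists [::], (chan w a b).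
- by move=> _; exists [::], (chan w a b).
case=> -> [m [rest [-> chan_a0s]]]; case: ifP => [/andP [/eqP -> /eqP ->]|_].
  by rewrite chan_a0s; exists [:: m], rest; split=> // M [<-|[]].
by exists [::], (chan w a b).
Qed.

Lemma proposed_grows x a T k : proposed (sst w x) a T k -> proposed (sst w' x) a T k.
Proof. by rewrite (ws_sst W); case: eqP => [->|//]; exact: (ls_proposed L). Qed.

Lemma processed_proposed {a b h T k} :
  (forall M, In M h -> [/\ from = Some a, b = s & mo = Some M]) ->
  In (MProposed T k) h -> proposed (sst w' b) a T k.
Proof.
move=> h_processed /h_processed [from_a -> mo_P].
by rewrite (ws_sst W) eqxx; exact: (ls_proposed_recv L _ _ _ from_a mo_P).
Qed.

Lemma received_from_chan {a m} : from = Some a -> mo = Some m ->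
  exists rest, chan w a s = m :: rest.
Proof.
move: D; case: src => [[a0|]|] /=; last 2 first.
- by case=> ->.
- by move=> ->.
by case=> -> [m' [rest [-> chan_as]]] [<-] [<-]; exists rest.
Qed.

Lemma received_confirm_covers {a T t} : correct a -> from = Some a ->
  mo = Some (MConfirm T t) -> acks_known_below w s a t.
Proof.
move=> ca from_a /(received_from_chan from_a) [rest chan_as].
have [t_le acks] := chan_confirm_covers IM a s [::] rest T t ca cs chan_as.
by split=> // T' k ack_a k_lt; case: (acks T' k ack_a k_lt).
Qed.

Lemma ack_delivered_step a b T k : correct a -> correct b -> acked w' T a k ->
  proposed (sst w' b) a T k \/ In (MProposed T k) (chan w' a b).
Proof.
move=> ca cb; have [h [rest [chan_ab -> h_processed]]] := chan_step a b.
move=> /(ws_acked W) [ack_a|[/(ls_ack L) [mo_P ->] ->]].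
- case: (ack_delivered IM a b T k ca cb ack_a) => [/proposed_grows|]; first by left.
  rewrite chan_ab => /(List.in_app_or _ _ _) [/(processed_proposed h_processed)|]; first by left.
  by right; apply: List.in_or_app; left.
- by right; rewrite eqxx; apply: List.in_or_app; right; exact: (ls_out_proposed L).
Qed.

Lemma chan_confirm_covers_step a b p q T t : correct a -> correct b ->
  chan w' a b = p ++ MConfirm T t :: q ->
  t <= clock (sst w' a) /\ forall T' k, acked w' T' a k -> k < t ->
    proposed (sst w' b) a T' k \/ In (MProposed T' k) p.
Proof.
move=> ca cb; have [h [rest [chan_ab -> h_processed]]] := chan_step a b.
case/(@cat_eq_cat_cons Msg) => [[q' rest_eq]|[p' p_eq out_eq]].
- have := chan_confirm_covers IM a b (h ++ p) q' T t ca cb.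
  rewrite chan_ab rest_eq catA => /(_ erefl) [t_le acks].
  split; first by case: g => clock_le _ _ _ _; exact: leq_trans t_le (clock_le a ca).
  move=> T' k ack' k_lt; have ack_a := acked_below_grows g t_le ack' k_lt.
  case: (acks T' k ack_a k_lt) => [/proposed_grows|]; first by left.
  by case/(List.in_app_or _ _ _) => [/(processed_proposed h_processed)|]; [left|right].
- move: out_eq; case: eqP => [a_s out_eq|_]; last by case: p' {p_eq}.
  subst a; have [mo_C t_le] : mo = Some (MConfirm T t) /\ t <= clock σ'.
    by apply: (ls_out_confirm L); rewrite out_eq; apply: List.in_or_app; right; left.
  split; first by rewrite (ws_sst W) eqxx.
  move=> T' k /(ws_acked W) [ack_s _|[/(ls_ack L) [mo_P _] _]]; last by rewrite mo_P in mo_C.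
  case: (ack_delivered IM s b T' k cs cb ack_s) => [/proposed_grows|]; first by left.
  rewrite chan_ab => /(List.in_app_or _ _ _) [/h_processed [_ _ mo_P]|].
    by rewrite mo_P in mo_C.
  by right; rewrite p_eq; apply: List.in_or_app; left.
Qed.

Lemma acks_known_below_grows {x a t} : correct a ->
  acks_known_below w x a t -> acks_known_below w' x a t.
Proof.
case: g => clock_le _ _ _ _ ca [t_le acks]; split; first exact: leq_trans t_le (clock_le a ca).
move=> T k ack' k_lt; apply/proposed_grows/acks => //; exact: acked_below_grows g t_le ack' k_lt.
Qed.

Lemma cwit_covers_step x a T : correct x -> correct a -> a \in cwit (sst w' x) T ->
  exists2 t, cconfirm w' T = Some t & acks_known_below w' x a t.
Proof.
have [_ _ _ cconfirm_le _] := g.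
move=> cx ca; case: (eqVneq x s) => [->|x_neq_s] cwit_a; last first.
  rewrite (ws_sst W) (negbTE x_neq_s) in cwit_a.
  have [t ct known] := cwit_covers IM x a T cx ca cwit_a.
  by exists t; [exact: cconfirm_le|exact: acks_known_below_grows].
rewrite (ws_sst W) eqxx in cwit_a; case/(ls_cwit L): cwit_a => [cwit_a|[from_a [t mo_C]]].
  have [t ct known] := cwit_covers IM s a T cs ca cwit_a.
  by exists t; [exact: cconfirm_le|exact: acks_known_below_grows].
exists t; first exact/cconfirm_le/delivered_confirm_signed.
exact/acks_known_below_grows/(received_confirm_covers ca from_a mo_C).
Qed.

Lemma pending_closed_step x t T0 : correct x -> pending (sst w' x) t T0 ->
  quorum_closed_below w' t (pending (sst w' x) t).
Proof.
move=> cx; case: (eqVneq x s) => [->|x_neq_s]; last first.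
  rewrite (ws_sst W) (negbTE x_neq_s) => /(pending_closed IM x t T0 cx).
  exact: quorum_closed_below_grows g (fun _ => id).
rewrite (ws_sst W) eqxx; case: (ls_pending L t) => [same|[T [mo_C card_cwit sub]] _].
  move=> /same/(pending_closed IM s t T0 cs).
  by apply: quorum_closed_below_grows g _ => T' /same.
apply: quorum_closed_below_grows g sub _.
exists (cwit (confirm_core (sst w s) from T t) T); split; first by rewrite card_cwit.
move=> a a_cwit ca; have [t_le acks] : acks_known_below w s a t.
  have old_known : a \in cwit (sst w s) T -> acks_known_below w s a t.
    move=> /(cwit_covers IM s a T cs ca) [t' ct' known].
    by move: ct' known; rewrite (delivered_confirm_signed mo_C) => -[<-].
  move: a_cwit; rewrite /= eqxx; case from_a: from => [a0|]; last exact: old_known.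
  rewrite in_setU1 => /orP [/eqP a_a0|]; last exact: old_known.
  by subst a0; exact: received_confirm_covers ca from_a mo_C.
split=> // T' k ack_a k_lt; exists a, k; split=> //; split; [exact: acks|exact: ltnW].
Qed.

Lemma msg_inv_server_step : msg_inv w'.
Proof.
split.
- move=> T t; rewrite (ws_cconfirm W) => /(signed_quorum IM) [A [card_A acks]].
  exists A; split=> // a a_A ca; have [k ack_a k_lt] := acks a a_A ca.
  by exists k => //; apply/(ws_acked W); left.
- move=> a b T t; have [h [rest [chan_ab -> _]]] := chan_step a b.
  rewrite (ws_cconfirm W) => /(List.in_app_or _ _ _) [C_rest|].
    by apply: (chan_signed IM a b); rewrite chan_ab; apply: List.in_or_app; right.
  by case: eqP => [_ /(ls_out_confirm L) [/delivered_confirm_signed]|_ []].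
- by move=> T' b T t /(ws_cchan W) /(cchan_signed IM); rewrite (ws_cconfirm W).
- move=> x t T cx; rewrite (ws_sst W) (ws_cconfirm W).
  case: eqP => _; last exact: (confirmed_signed IM).
  by case/(ls_confirmed L) => [/(confirmed_signed IM s t T cs)|/delivered_confirm_signed].
- exact: ack_delivered_step.
- exact: chan_confirm_covers_step.
- exact: cwit_covers_step.
- exact: pending_closed_step.
Qed.

End Server_step.

Arguments msg_inv_server_step {w w' s σ' out ack src from mo}.

Lemma precedes_safely_grows {w w' x T2 T1} : grows w w' -> correct x ->
  precedes_safely w x T2 T1 -> precedes_safely w' x T2 T1.
Proof.
move=> g cx; have [_ _ _ cconfirm_le decided_le] := g.
case=> [cancelled_T1|[t2 [t1 [c2 c1 lt21]]]|[t2 c2 closed]].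
- by constructor 1; exact: decided_le.
- by constructor 2; exists t2, t1; split=> //; exact: cconfirm_le.
- by constructor 3; exists t2; [exact: cconfirm_le|exact: quorum_closed_below_grows g _ closed].
Qed.

Lemma apply_enabled_safe w s T2 T1 : msg_inv w -> correct s ->
  apply_enabled (sst w s) T2 -> ~ in_log (sst w s) T1 -> conflict T2 T1 ->
  precedes_safely w s T2 T1.
Proof.
move=> IM cs [t [_ conf_T2 [T' pend_T'] _ rule]] fresh_T1 conflict_21.
have [pend_T1|not_pend_T1] := Classical_Prop.classic (pending (sst w s) t T1).
  case: (rule T1 pend_T1) => [//|[|[//|[t2 [conf2 ord]]]]]; first by constructor 1.
  constructor 2; case: ord => [[t1 [conf1 lt21]]|[conf1 lt21]].
  - by exists t2, t1; split; [exact: (confirmed_signed IM s)|exact: (confirmed_signed IM s)|left].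
  - by exists t2, t2; split; [exact: (confirmed_signed IM s)|exact: (confirmed_signed IM s)|right].
constructor 3; exists t; first exact: (confirmed_signed IM s).
have [W [quorum_W closed_W]] := pending_closed IM s t T' cs pend_T'.
exists W; split=> // a a_W ca; have [t_le acks_pending] := closed_W a a_W ca.
by split=> // T k ack_a k_lt e_T; apply: not_pend_T1; rewrite -e_T; exact: acks_pending ack_a k_lt.
Qed.

Section Server_log_step.
Variables (w w' : WW) (s : Server) (σ' : SS) (out : seq Msg) (ack : option (Tx * nat)).
Variable (src : option (option Server)).
Hypotheses (IM : msg_inv w) (IL : log_inv w) (cs : correct s) (g : grows w w').
Hypotheses (W : world_spec w w' s σ' out ack src) (LS : log_step (sst w s) σ').
Hypothesis agree' : decisions_agree w'.

Lemma sst_step x : sst w' x = sst w x \/ x = s /\ sst w' x = σ'.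
Proof. by rewrite (ws_sst W); case: eqP => [->|_]; [right|left]. Qed.

Lemma applied_committed_grows x T : correct x -> (T, true) \in log (sst w x) ->
  committed (sst w' x) T /\ exists t, cconfirm w' T = Some t.
Proof.
have [_ _ _ cconfirm_le decided_le] := g.
move=> cx /(applied_committed IL x T cx) [committed_T [t ct]].
by split; [exact: decided_le|exists t; exact: cconfirm_le].
Qed.

Lemma applied_committed_step x T : correct x -> (T, true) \in log (sst w' x) ->
  committed (sst w' x) T /\ exists t, cconfirm w' T = Some t.
Proof.
have [_ _ _ cconfirm_le decided_le] := g.
move=> cx; case: (sst_step x) => [e|[-> e]]; rewrite [in log _]e.
  exact: applied_committed_grows.
case: LS => [->|[T0 -> [t [committed_T0 conf_T0 _ _ _]]]|[T0 -> _]].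
- exact: applied_committed_grows.
- rewrite mem_rcons in_cons => /orP [/eqP [->]|]; last exact: applied_committed_grows.
  split; first exact: decided_le.
  by exists t; apply/cconfirm_le/(confirmed_signed IM s).
- by rewrite mem_rcons in_cons => /orP [/eqP []|]; last exact: applied_committed_grows.
Qed.

Lemma log_uniq_step x : correct x -> uniq (map fst (log (sst w' x))).
Proof.
move=> cx; case: (sst_step x) => [->|[-> ->]]; first exact: (log_uniq IL).
have fresh T : ~ in_log (sst w s) T -> T \notin map fst (log (sst w s)).
  by move=> not_in; apply/mapP => -[[T' b] T'_in /= e_T]; apply: not_in; exists b; rewrite e_T.
case: LS => [->|[T0 -> [t [_ _ _ not_in _]]]|[T0 -> not_in]]; first exact: (log_uniq IL).
all: by rewrite map_rcons rcons_uniq fresh // (log_uniq IL).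
Qed.

Lemma applied_safe_step x p q T2 T1 : correct x -> log (sst w' x) = p ++ (T2, true) :: q ->
  T1 != T2 -> conflict T2 T1 -> (forall b, (T1, b) \notin p) -> precedes_safely w' x T2 T1.
Proof.
move=> cx; case: (sst_step x) => [e|[-> e]]; rewrite [in log _]e.
  move=> log_x neq c fresh; apply: (precedes_safely_grows g cx).
  exact: (applied_safe IL x p q T2 T1 cx log_x neq c fresh).
have old p' q' : log (sst w s) = p' ++ (T2, true) :: q' -> T1 != T2 -> conflict T2 T1 ->
    (forall b, (T1, b) \notin p') -> precedes_safely w' s T2 T1.
  move=> log_s neq c fresh; apply: (precedes_safely_grows g cs).
  exact: (applied_safe IL s p' q' T2 T1 cs log_s neq c fresh).
case: LS => [->|[T0 -> enabled]|[T0 -> _]].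
- exact: old.
- case/(@rcons_eq_cat_cons (Tx * bool)) => [[-> [->] _]|[q' log_s]]; last exact: old log_s.
  move=> _ c fresh; apply: (precedes_safely_grows g cs); apply: apply_enabled_safe => // -[b].
  by apply/negP; exact: fresh.
- by case/(@rcons_eq_cat_cons (Tx * bool)) => [[_ []]|[q' log_s]] //; exact: old log_s.
Qed.

Lemma log_inv_server_step : log_inv w'.
Proof.
split; [exact: agree'|exact: applied_committed_step|exact: log_uniq_step|exact: applied_safe_step].
Qed.

End Server_log_step.

Arguments log_inv_server_step {w w' s σ' out ack src}.

Lemma inv_server_step {w w' s σ' out ack src from mo} :
  msg_inv w -> log_inv w -> correct s -> world_spec w w' s σ' out ack src ->
  delivered w s src from mo -> local_spec from mo (sst w s) σ' out ack ->
  log_step (sst w s) σ' -> (forall T v, decided (sst w s) T v -> decided σ' T v) ->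
  decisions_agree w' -> msg_inv w' /\ log_inv w'.
Proof.
move=> IM IL cs W D L LS decided_le agree'; have g := grows_server W L decided_le.
split; first exact: msg_inv_server_step IM cs g W D L.
exact: log_inv_server_step IM IL cs g W LS agree'.
Qed.

Lemma decided_agree_frame {w w' s σ' out ack src} : log_inv w ->
  world_spec w w' s σ' out ack src -> decided σ' = decided (sst w s) -> decisions_agree w'.
Proof.
move=> IL W e x x' T v v' cx cx'; rewrite !(ws_sst W).
case: eqP => [ex|_]; case: eqP => [ex'|_]; rewrite /= ?e -?ex -?ex'.
all: exact: (decided_agree IL).
Qed.

Lemma decided_agree_decide {w s T v} : log_inv w ->
  (forall s' v', correct s' -> decided (sst w s') T v' -> v' = v) ->
  decisions_agree (upd_s w s (decide f Tx (sst w s) T v)).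
Proof.
move=> IL agreement.
have new x T0 v0 : decided (sst (upd_s w s (decide f Tx (sst w s) T v)) x) T0 v0 ->
    decided (sst w x) T0 v0 \/ T0 = T /\ v0 = v.
  by rewrite /=; case: eqP => [->|_] /=; [case=> [[-> ->]|]; [right|left]|left].
move=> x x' T0 v0 v0' cx cx' /new [d|[e_T ->]] /new [d'|[e_T' ->]] //.
- exact: (decided_agree IL) d d'.
- by move: d; rewrite e_T' => /(agreement _ _ cx).
- by move: d'; rewrite e_T => /(agreement _ _ cx') ->.
Qed.

Lemma inv_env_step {w w' : WW} : msg_inv w -> log_inv w ->
  sst w' = sst w -> acked w' = acked w ->
  (forall T t, cconfirm w T = Some t -> cconfirm w' T = Some t) ->
  (forall T t, cconfirm w' T = Some t -> cconfirm w T = Some t \/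
     exists A : {set Server}, 2 * f + 1 <= #|A| /\
       forall a, a \in A -> correct a -> exists2 k, acked w T a k & k < t) ->
  (forall a b, correct a -> chan w' a b = chan w a b) ->
  (forall a b T t, In (MConfirm T t) (chan w' a b) ->
     cconfirm w' T = Some t \/ In (MConfirm T t) (chan w a b)) ->
  (forall T' b T t, In (MConfirm T t) (cchan w' T' b) ->
     cconfirm w' T = Some t \/ In (MConfirm T t) (cchan w T' b)) ->
  msg_inv w' /\ log_inv w'.
Proof.
move=> IM IL e_sst e_acked cconfirm_le new_cconfirm e_chan new_chan new_cchan.
have g : grows w w' by split=> //; rewrite ?e_sst ?e_acked //; left.
split; split; rewrite ?e_sst ?e_acked.
- by move=> T t /new_cconfirm [/(signed_quorum IM)|].
- by move=> a b T t /new_chan [//|/(chan_signed IM)/cconfirm_le].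
- by move=> T' b T t /new_cchan [//|/(cchan_signed IM)/cconfirm_le].
- by move=> s t T cs /(confirmed_signed IM s t T cs)/cconfirm_le.
- by move=> a s T k ca cs; rewrite e_chan //; exact: (ack_delivered IM).
- by move=> a s p q T t ca cs; rewrite e_chan //; exact: (chan_confirm_covers IM).
- move=> s a T cs ca /(cwit_covers IM s a T cs ca) [t /cconfirm_le ct known].
  by exists t; rewrite // /acks_known_below e_sst e_acked.
- move=> s t T cs /(pending_closed IM s t T cs).
  exact: quorum_closed_below_grows g (fun _ => id).
- by rewrite /decisions_agree e_sst; exact: (decided_agree IL).
- move=> s T cs /(applied_committed IL s T cs) [committed_T [t /cconfirm_le ct]].
  by split=> //; exists t.
- exact: (log_uniq IL).
- move=> s p q T2 T1 cs log_s neq c fresh.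
  by apply: (precedes_safely_grows g cs); exact: (applied_safe IL s p q T2 T1 cs log_s neq c fresh).
Qed.

Lemma inv_step {w w'} : msg_inv w -> log_inv w -> step w w' -> msg_inv w' /\ log_inv w'.
Proof.
move=> IM IL step_ww'; move: step_ww' IM IL; case=> {w w'}.
- move=> T w _ IM IL; apply: (inv_env_step IM IL) => //; try by left.
  + by move=> a b T' t; right.
  + move=> T' b T0 t /=; case: eqP => _ C_in; last by right.
    by case: (In_rcons C_in) => [|//]; right.
- move=> T S K w _ undecided quorum_S acks IM IL; apply: (inv_env_step IM IL) => //=.
  + by move=> T0 t; case: eqP => [->|//]; rewrite undecided.
  + move=> T0 t; case: eqP => [-> [<-]|_]; last by left.
    right; exists [set s in S | K s < hat_t f S K]; split; first exact: hat_t_quorum.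
    by move=> a; rewrite inE => /andP [a_S lt] ca; exists (K a); first exact: acks.
  + by move=> a b T0 t; right.
  + move=> T' b T0 t; case: eqP => [->|_] C_in; last by right.
    by case: (In_rcons C_in) => [|[-> ->]]; [right|left; rewrite eqxx].
- move=> T s m rest σ' out ack w cs cchan_Ts /srecv_spec [L e_log e_dec] IM IL.
  have W := world_spec_client σ' out ack cchan_Ts.
  apply: inv_server_step IM IL cs W _ L _ _ (decided_agree_frame IL W e_dec).
  + by split=> //; exists T, m, rest.
  + by constructor 1.
  + by rewrite e_dec.
- move=> a s m rest σ' out ack w cs chan_as /srecv_spec [L e_log e_dec] IM IL.
  have W := world_spec_server σ' out ack chan_as.
  apply: inv_server_step IM IL cs W _ L _ _ (decided_agree_frame IL W e_dec).
  + by split=> //; exists m, rest.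
  + by constructor 1.
  + by rewrite e_dec.
- move=> s σ' out w cs /slocal_spec [L e_dec LS] IM IL.
  have W := world_spec_local w s σ' out.
  apply: inv_server_step IM IL cs W _ L LS _ (decided_agree_frame IL W e_dec) => //.
  by rewrite e_dec.
- move=> s T v w cs _ _ agreement _ IM IL.
  apply: inv_server_step IM IL cs (world_spec_decide w s _) _ (decide_spec _ T v) _ _
    (decided_agree_decide IL agreement) => //.
  + by constructor 1.
  + by move=> T0 v0; right.
- move=> b s m w b_Byz byz_m IM IL; apply: (inv_env_step IM IL) => //; try by left.
  + by move=> a b' ca /=; case: ifP => // /andP [/eqP a_b _]; rewrite -a_b (negbTE ca) in b_Byz.
  + move=> a b' T t /=; case: ifP => _ C_in; last by right.
    by case: (In_rcons C_in) => [|m_C]; [right|left; rewrite -m_C in byz_m].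
  + by move=> T' b' T t; right.
Qed.

Lemma inv_reachable w : reachable f Tx Key rset wset ltx Byz w -> msg_inv w /\ log_inv w.
Proof.
elim=> [|w0 w1 _ [IM IL] /(inv_step IM IL) //].
split; split=> //=.
- by move=> a s [|? ?] q T t _ _.
- by move=> s a T _ _; rewrite in_set0.
- by move=> s [|? ?] q T2 T1 _.
Qed.

(* A quorum of [n - f] and a set of [2f + 1] among [n = 4f + 1] servers share
   [f + 1] members, hence a correct one. *)
Lemma signed_not_closed_below w B tB tA : #|Byz| <= f -> msg_inv w ->
  cconfirm w B = Some tB -> tB <= tA -> ~ quorum_closed_below w tA (fun T => T <> B).
Proof.
move=> card_Byz IM /(signed_quorum IM) [A [card_A acks_A]] tB_le [W [card_W closed_W]].
have : f < #|W :&: A|.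
  by have := cardsUI W A; have := max_card (W :|: A); rewrite card_ord; lia.
case: (boolP (W :&: A \subset Byz)) => [/subset_leq_card|/subsetPn [a]]; first lia.
rewrite in_setI => /andP [a_W a_A] ca _.
have [_ acks_below] := closed_W a a_W ca; have [k ack_a k_lt] := acks_A a a_A ca.
exact: (acks_below B k ack_a (leq_trans k_lt tB_le) erefl).
Qed.

Lemma applied_before_evidence w s T1 T2 t1 t2 : log_inv w -> correct s -> conflict T1 T2 ->
  cconfirm w T1 = Some t1 -> cconfirm w T2 = Some t2 ->
  before (log (sst w s)) (T1, true) (T2, true) ->
  ts_lt t1 T1 t2 T2 \/ quorum_closed_below w t1 (fun T => T <> T2).
Proof.
move=> IL cs conflict_12 ct1 ct2 [l1 [l2 [l3 log_s]]].
have := log_uniq IL s cs; rewrite log_s => /uniq_fst_before /= [neq fresh].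
have T2_in : (T2, true) \in log (sst w s) by rewrite log_s mem_cat inE mem_cat inE eqxx !orbT.
have [committed_T2 _] := applied_committed IL s T2 cs T2_in.
have := applied_safe IL s l1 _ T1 T2 cs log_s; rewrite eq_sym => /(_ neq conflict_12 fresh).
case=> [cancelled_T2|[t1' [t2' [ct1' ct2' lt]]]|[t1' ct1' closed]].
- by have := decided_agree IL s s T2 _ _ cs cs cancelled_T2 committed_T2.
- by move: ct1' ct2' lt; rewrite ct1 ct2 => -[<-] [<-]; left.
- by move: ct1' closed; rewrite ct1 => -[<-]; right.
Qed.

Lemma ts_evidence_exclusive w T1 T2 t1 t2 : irreflexive ltx -> transitive ltx ->
  #|Byz| <= f -> msg_inv w -> cconfirm w T1 = Some t1 -> cconfirm w T2 = Some t2 ->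
  ts_lt t1 T1 t2 T2 \/ quorum_closed_below w t1 (fun T => T <> T2) ->
  ts_lt t2 T2 t1 T1 \/ quorum_closed_below w t2 (fun T => T <> T1) -> False.
Proof.
move=> ltx_irr ltx_trans card_Byz IM ct1 ct2.
have ts_le t T t' T' : ts_lt t T t' T' -> t <= t' by case=> [/ltnW|[-> _]].
case=> [lt12|closed1] [lt21|closed2].
- case: lt12 lt21 => [lt12|[-> lt12]] [lt21|[e lt21]]; try lia.
  by have := ltx_trans _ _ _ lt12 lt21; rewrite ltx_irr.
- exact: signed_not_closed_below card_Byz IM ct1 (ts_le _ _ _ _ lt12) closed2.
- exact: signed_not_closed_below card_Byz IM ct2 (ts_le _ _ _ _ lt21) closed1.
case: (leqP t1 t2) => [le12|/ltnW le21].
- exact: signed_not_closed_below card_Byz IM ct1 le12 closed2.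
- exact: signed_not_closed_below card_Byz IM ct2 le21 closed1.
Qed.

End Byblos_safety.

Arguments inv_reachable {f Tx Key rset wset ltx Byz w}.
Arguments applied_committed {f Tx Key rset wset ltx Byz w}.
Arguments log_uniq {f Tx Key rset wset ltx Byz w}.
Arguments applied_before_evidence {f Tx Key rset wset ltx Byz w s T1 T2 t1 t2}.
Arguments ts_evidence_exclusive {f Tx ltx Byz w T1 T2 t1 t2}.

Theorem lemma5 (f : nat) (Tx : eqType) (Key : Type) (rset wset : Tx -> Key -> Prop)
  (ltx : rel Tx)
  (ltx_irr : irreflexive ltx) (ltx_trans : transitive ltx)
  (ltx_total : forall x y : Tx, x != y -> ltx x y || ltx y x)
  (Byz : {set 'I_(4 * f + 1)}) (hByz : #|Byz| <= f)
  (w : World f Tx) (hw : reachable f Tx Key rset wset ltx Byz w)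
  (s1 s2 : 'I_(4 * f + 1)) (T1 T2 : Tx) :
  s1 \notin Byz -> s2 \notin Byz ->
  conflict Tx Key rset wset T1 T2 ->
  before (log f Tx (sst f Tx w s1)) (T1, true) (T2, true) ->
  (T1, true) \in log f Tx (sst f Tx w s2) ->
  (T2, true) \in log f Tx (sst f Tx w s2) ->
  before (log f Tx (sst f Tx w s2)) (T1, true) (T2, true).
Proof.
move=> c1 c2 conflict_12 before1 in1 in2.
have [IM IL] := inv_reachable hw.
have [_ [t1 ct1]] := applied_committed IL s2 T1 c2 in1.
have [_ [t2 ct2]] := applied_committed IL s2 T2 c2 in2.
have neq : (T1, true) != (T2, true).
  case: before1 => [l1 [l2 [l3 log_s1]]].
  have := log_uniq IL s1 c1; rewrite log_s1 => /uniq_fst_before [/= neq _].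
  by apply: contraNneq neq => -[->].
have [//|before2] := before_total in1 in2 neq.
have conflict_21 : conflict Tx Key rset wset T2 T1 by case: conflict_12; [right|left].
exfalso; apply: (ts_evidence_exclusive ltx_irr ltx_trans hByz IM ct1 ct2).
- exact: applied_before_evidence IL c1 conflict_12 ct1 ct2 before1.
- exact: applied_before_evidence IL c2 conflict_21 ct2 ct1 before2.
Qed.
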